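(* Let $G_1$ and $G_2$ be finite simple undirected graphs. Then $G_1\cong G_2$ if and only if $\sigma(G_1)=\sigma(G_2)$.
   Context: A clique is a set of pairwise adjacent vertices; a set $S$ of cliques of $G$ is a total clique covering if every vertex lies in some member of $S$ and every edge has both endpoints in some member of $S$; $\theta_t(G)$ is the minimum size of a total clique covering. The code $\sigma(G)$ of a graph $G=(V,E)$ with $|V|=m$ and $s\ge0$ isolated vertices is defined as follows. Let $k=\theta_t(G)-s$. For a total clique covering $S=\{C_1,\ldots,C_{s+k}\}$ with $|S|=\theta_t(G)$, where $C_1,\ldots,C_s$ are the singleton cliques of the isolated vertices, and for each bijective assignment of the first $k$ primes to the cliques $C_{s+1},\ldots,C_{s+k}$, label each vertex $v$ by $1$ if $v$ is isolated and otherwise by the product of the primes assigned to the cliques among $C_{s+1},\ldots,C_{s+k}$ that contain $v$; listing these labels in non-decreasing order gives a sequence in $\mathbb{Z}^m$ (a coding sequence). Let $\sigma[S]$ be the lexicographically least of the (at most $k!$) sequences so obtained. Then $\sigma(G)$ is the lexicographically least element of $\{\sigma[S] : S \text{ a total clique covering of } G \text{ with } |S|=\theta_t(G)\}$. *)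

From mathcomp Require Import all_boot.
Set Implicit Arguments. Unset Strict Implicit. Unset Printing Implicit Defensive.

(* The (0-indexed) i-th prime: nth_prime 0 = 2, nth_prime 1 = 3, ... *)
Lemma exists_prime_above (p : nat) : exists q, (p < q) && prime q.
Proof. by case: (prime_above p) => q H1 H2; exists q; rewrite H1 H2. Qed.

Definition next_prime (p : nat) : nat := ex_minn (exists_prime_above p).

Definition nth_prime (i : nat) : nat := iter i.+1 next_prime 1.

Fixpoint lexle (s t : seq nat) : bool :=
  match s, t with
  | [::], _ => true
  | _ :: _, [::] => false
  | x :: s', y :: t' => (x < y) || ((x == y) && lexle s' t')
  end.

Definition lexmin (s t : seq nat) : seq nat := if lexle s t then s else t.

Definition lexmin_list (l : seq (seq nat)) : seq nat :=
  match l with [::] => [::] | c :: cs => foldr lexmin c cs end.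

Section Code.
Variables (V : finType) (e : rel V).

Definition clique (C : {set V}) : bool :=
  (C != set0) && [forall x in C, forall y in C, (x != y) ==> e x y].

Definition total_clique_covering (Cv : {set {set V}}) : bool :=
  [&& [forall C in Cv, clique C],
      [forall v, exists C in Cv, v \in C] &
      [forall x, forall y, e x y ==> [exists C in Cv, (x \in C) && (y \in C)]]].

Definition min_total_clique_covering (Cv : {set {set V}}) : bool :=
  total_clique_covering Cv &&
  [forall Cv' : {set {set V}}, total_clique_covering Cv' ==> (#|Cv| <= #|Cv'|)].

Definition isolated (v : V) : bool := [forall u, ~~ e v u].

Definition nonisolated_cliques (Cv : {set {set V}}) : {set {set V}} :=
  [set C in Cv | ~~ [exists v, isolated v && (C == [set v])]].

(* an ordering s of the k cliques encodes the bijective assignment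
   clique (nth set0 s i) |-> nth_prime i *)
Definition vertex_label (s : seq {set V}) (v : V) : nat :=
  if isolated v then 1
  else \prod_(i < size s | v \in nth set0 s i) nth_prime i.

Definition coding_sequence (s : seq {set V}) : seq nat :=
  sort leq [seq vertex_label s v | v <- enum V].

Definition code_of_covering (Cv : {set {set V}}) : seq nat :=
  lexmin_list [seq coding_sequence s | s <- permutations (enum (nonisolated_cliques Cv))].

Definition code : seq nat :=
  lexmin_list [seq code_of_covering Cv
              | Cv <- enum [set Cv : {set {set V}} | min_total_clique_covering Cv]].

End Code.

Definition simple_graph (V : finType) (e : rel V) : Prop :=
  symmetric e /\ irreflexive e.

Definition graph_iso (V1 V2 : finType) (e1 : rel V1) (e2 : rel V2) : Prop :=
  exists f : V1 -> V2, bijective f /\ forall x y, e2 (f x) (f y) = e1 x y.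

From mathcomp Require Import all_boot all_order perm.
Set Implicit Arguments. Unset Strict Implicit. Unset Printing Implicit Defensive.
Import Order.TTheory.

(* Transporting coverings along an isomorphism preserves minimality and every
   coding sequence, so isomorphic graphs have the same code.  Conversely, the
   code is the sorted list of vertex labels for some minimum covering and some
   assignment of primes.  Distinct cliques receive distinct primes and isolated
   vertices are labelled 1, so two vertices are adjacent exactly when they are
   distinct and their labels have a common prime factor.  Equal codes provide a
   label-preserving bijection between the vertex sets, which is therefore an
   isomorphism. *)

Lemma next_primeP p : p < next_prime p /\ prime (next_prime p).
Proof. by rewrite /next_prime; case: ex_minnP => q /andP[]. Qed.

Lemma nth_prime_prime i : prime (nth_prime i).
Proof. exact: (next_primeP _).2. Qed.

Lemma nth_prime_inj : injective nth_prime.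
Proof.
apply/incn_inj/leq_mono; apply: homo_ltn => [i j k|i]; first exact: ltn_trans.
exact: (next_primeP _).1.
Qed.

Section ProductOfPrimes.
Variables (I : finType) (p : I -> nat).
Hypotheses (p_prime : forall i, prime (p i)) (p_inj : injective p).

Lemma prime_dvd_prod_primes (A : pred I) q :
  prime q -> q %| \prod_(i | A i) p i -> exists2 i, A i & q = p i.
Proof.
move=> q_prime; rewrite (Euclid_dvd_prod _ _ _ q_prime).
elim/big_rec: _ => // i b Ai IH /orP[|/IH//].
by rewrite (dvdn_prime2 q_prime (p_prime i)) => /eqP->; exists i.
Qed.

Lemma gcd_prod_primes_gt1 (A B : pred I) :
  (1 < gcdn (\prod_(i | A i) p i) (\prod_(i | B i) p i)) = [exists i, A i && B i].
Proof.
have prod_gt0 (C : pred I) : 0 < \prod_(i | C i) p i.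
  by apply: prodn_gt0 => i; apply: prime_gt0.
apply/idP/existsP => [/pdivP[q q_prime] | [i /andP[Ai Bi]]].
  rewrite dvdn_gcd => /andP[qA qB].
  have [i Ai qi] := prime_dvd_prod_primes q_prime qA.
  have [j Bj qj] := prime_dvd_prod_primes q_prime qB.
  by exists i; rewrite Ai (p_inj (etrans (esym qi) qj)).
apply: leq_trans (prime_gt1 (p_prime i)) (dvdn_leq _ _).
  by rewrite gcdn_gt0 prod_gt0.
by rewrite dvdn_gcd !(bigD1 i Ai, bigD1 i Bi) /= !dvdn_mulr.
Qed.

End ProductOfPrimes.

Lemma lexleE (s t : seq nat) : lexle s t = (s <= t :> seqlexi nat)%O.
Proof.
elim: s t => [|x s IH] [|y t] //=.
by rewrite lexi_cons !leEnat IH; case: ltngtP.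
Qed.

Lemma lexmin_list_cons c cs :
  lexmin_list (c :: cs) \in c :: cs /\
  {in c :: cs, forall x, lexle (lexmin_list (c :: cs)) x}.
Proof.
rewrite /=; elim: cs => [|d cs [m_in m_le]] /=.
  by split=> [|x /[!inE]/eqP->]; rewrite ?mem_head ?lexleE.
have lexmin_min :
    lexmin d (foldr lexmin c cs) = Order.min (d : seqlexi nat) (foldr lexmin c cs).
  by rewrite minEle /lexmin lexleE.
split.
  rewrite /lexmin; case: ifP => _; first by rewrite !inE eqxx orbT.
  by move: m_in; rewrite !inE => /orP[]->; rewrite ?orbT.
move=> x; rewrite !inE lexleE lexmin_min ge_min => /or3P[/eqP->|/eqP->|x_cs].
- by rewrite -!lexleE m_le ?mem_head ?orbT.
- by rewrite lexx.
- by rewrite -!lexleE m_le ?orbT // inE x_cs orbT.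
Qed.

Lemma lexmin_list_in (l : seq (seq nat)) x : x \in l -> lexmin_list l \in l.
Proof. by case: l => // c cs _; case: (lexmin_list_cons c cs). Qed.

Lemma eq_lexmin_list (l1 l2 : seq (seq nat)) :
  l1 =i l2 -> lexmin_list l1 = lexmin_list l2.
Proof.
case: l1 l2 => [|c1 cs1] [|c2 cs2] l12.
- by [].
- by have := l12 c2; rewrite mem_head.
- by have := l12 c1; rewrite mem_head.
have [m1_in m1_le] := lexmin_list_cons c1 cs1.
have [m2_in m2_le] := lexmin_list_cons c2 cs2.
apply: (@le_anti _ (seqlexi nat)); rewrite -!lexleE m1_le ?m2_le //.
- by rewrite -l12.
- by rewrite l12.
Qed.

Section CliqueCoverings.
Variables (V : finType) (e : rel V).
Hypotheses (e_sym : symmetric e) (e_irr : irreflexive e).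

Lemma adj_covering Cv : total_clique_covering e Cv -> forall u v,
  e u v = (u != v) && [exists C in nonisolated_cliques e Cv, (u \in C) && (v \in C)].
Proof.
move=> /and3P[/forallP Cv_cliques _ /forallP Cv_edges] u v.
apply/idP/andP => [euv | [uv /exists_inP[C]]].
  have uv : u != v by apply: contraTneq euv => ->; rewrite e_irr.
  have /exists_inP[C CCv /andP[uC vC]] := implyP (forallP (Cv_edges u) v) euv.
  split=> //; apply/exists_inP; exists C; rewrite ?uC ?vC //.
  rewrite inE CCv; apply/existsP => -[w /andP[_ /eqP Cw]].
  by move: uC vC uv; rewrite Cw !inE => /eqP-> /eqP->; rewrite eqxx.
rewrite inE => /andP[/(implyP (Cv_cliques C))/andP[_ /forallP C_clique] _] /andP[uC vC].
by move: (forallP (implyP (C_clique u) uC) v); rewrite vC uv.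
Qed.

Lemma adj_vertex_label Cv s :
  total_clique_covering e Cv -> perm_eq s (enum (nonisolated_cliques e Cv)) ->
  forall u v, e u v = (u != v) && (1 < gcdn (vertex_label e s u) (vertex_label e s v)).
Proof.
move=> Cv_cover s_perm u v; rewrite /vertex_label.
case: ifPn => [/forallP/(_ v)/negbTE->|_]; first by rewrite gcd1n andbF.
case: ifPn => [/forallP/(_ u)|_]; first by rewrite e_sym gcdn1 andbF => /negbTE.
have ord_nth_prime_inj : injective (fun i : 'I_(size s) => nth_prime i).
  by move=> i j /nth_prime_inj/val_inj.
rewrite (gcd_prod_primes_gt1 (fun i : 'I_(size s) => nth_prime_prime i) ord_nth_prime_inj).
rewrite (adj_covering Cv_cover); congr (_ && _); apply/exists_inP/existsP.
  move=> [C]; rewrite -mem_enum -(perm_mem s_perm) => Cs uvC.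
  by exists (Ordinal (etrans (index_mem C s) Cs)); rewrite /= nth_index.
move=> [i uvi]; exists (nth set0 s i) => //.
by rewrite -mem_enum -(perm_mem s_perm) mem_nth.
Qed.

Lemma clique_set1 v : clique e [set v].
Proof.
apply/andP; split; first by apply/set0Pn; exists v; rewrite set11.
by apply/forall_inP => x /set1P->; apply/forall_inP => y /set1P->; rewrite eqxx.
Qed.

Lemma clique_set2 x y : e x y -> clique e [set x; y].
Proof.
move=> exy; apply/andP; split; first by apply/set0Pn; exists x; rewrite set21.
apply/forall_inP => a /set2P[]->; apply/forall_inP => b /set2P[]->;
  by rewrite ?eqxx ?exy ?implybT // e_sym exy implybT.
Qed.

Lemma cliques_total_clique_covering : total_clique_covering e [set C | clique e C].
Proof.
apply/and3P; split.
- by apply/forall_inP => C; rewrite inE.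
- by apply/forallP => v; apply/exists_inP; exists [set v]; rewrite ?inE ?clique_set1 ?eqxx.
- apply/forallP => x; apply/forallP => y; apply/implyP => exy; apply/exists_inP.
  by exists [set x; y]; rewrite ?inE ?clique_set2 ?eqxx ?orbT.
Qed.

Lemma exists_min_total_clique_covering : exists Cv, min_total_clique_covering e Cv.
Proof.
have [Cv Cv_cover Cv_min] :=
  arg_minnP (fun Cv : {set {set V}} => #|Cv|) cliques_total_clique_covering.
by exists Cv; rewrite /min_total_clique_covering Cv_cover; apply/forall_inP => Cv' /Cv_min.
Qed.

Lemma code_coding_sequence : exists Cv s, [/\ total_clique_covering e Cv,
  perm_eq s (enum (nonisolated_cliques e Cv)) & code e = coding_sequence e s].
Proof.
have [Cv0 Cv0_min] := exists_min_total_clique_covering.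
have /mapP[Cv] : code e \in
    [seq code_of_covering e Cv | Cv <- enum [set Cv | min_total_clique_covering e Cv]].
  by apply: (@lexmin_list_in _ (code_of_covering e Cv0)); rewrite map_f ?mem_enum ?inE.
rewrite mem_enum inE => /andP[Cv_cover _] ->.
set N := enum (nonisolated_cliques e Cv).
have /mapP[s] : code_of_covering e Cv \in [seq coding_sequence e s | s <- permutations N].
  by apply: (@lexmin_list_in _ (coding_sequence e N)); rewrite map_f ?mem_permutations.
by rewrite mem_permutations => s_perm ->; exists Cv, s.
Qed.

End CliqueCoverings.

Lemma perm_codom_bij (V W : finType) (T : eqType) (L : V -> T) (M : W -> T) :
  perm_eq (codom M) (codom L) -> exists2 h : W -> V, bijective h & forall w, L (h w) = M w.
Proof.
case/tuple_permP=> p codomM.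
have cardWV : #|W| = #|V| by rewrite -(size_codom M) codomM size_tuple.
pose h w := enum_val (p (cast_ord cardWV (enum_rank w))).
have Lh w : L (h w) = M w.
  rewrite -{2}(enum_rankK w) -(nth_codom (M w) M) codomM.
  rewrite -[nat_of_ord (enum_rank w)]/(nat_of_ord (cast_ord cardWV (enum_rank w))).
  by rewrite -tnth_nth tnth_mktuple (tnth_nth (L (h w))) nth_codom.
exists h => //; apply: inj_card_bij; last by rewrite cardWV.
by move=> w1 w2 /enum_val_inj/perm_inj/cast_ord_inj/enum_rank_inj.
Qed.

Lemma imsetK (T1 T2 : finType) (f : T1 -> T2) (g : T2 -> T1) :
  cancel f g -> cancel (fun A : {set T1} => f @: A) (fun B : {set T2} => g @: B).
Proof. by move=> fK A; rewrite -imset_comp (eq_imset _ fK) imset_id. Qed.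

Definition image_cover (T1 T2 : finType) (f : T1 -> T2) (Cv : {set {set T1}}) :
  {set {set T2}} := [set f @: C | C : {set T1} in Cv].

Section GraphIsoTransport.
Variables (V1 V2 : finType) (e1 : rel V1) (e2 : rel V2) (f : V1 -> V2) (g : V2 -> V1).
Hypotheses (fK : cancel f g) (gK : cancel g f).
Hypothesis f_adj : forall x y, e2 (f x) (f y) = e1 x y.

Let f_inj : injective f := can_inj fK.
Let imset_f_inj : injective (fun C : {set V1} => f @: C) := can_inj (imsetK fK).

Lemma adj_can_inv x y : e1 (g x) (g y) = e2 x y.
Proof. by rewrite -f_adj !gK. Qed.

Lemma isolated_iso v : isolated e2 (f v) = isolated e1 v.
Proof.
apply/forallP/forallP => iso_v u; first by rewrite -f_adj.
by rewrite -(gK u) f_adj.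
Qed.

Lemma clique_imset (C : {set V1}) : clique e1 C -> clique e2 (f @: C).
Proof.
case/andP=> C_neq0 /forall_inP C_clique; rewrite /clique imset_eq0 C_neq0.
apply/forall_inP => _ /imsetP[x xC ->]; apply/forall_inP => _ /imsetP[y yC ->].
by rewrite (inj_eq f_inj) f_adj; apply: (forall_inP (C_clique x xC)).
Qed.

Lemma total_clique_covering_image Cv :
  total_clique_covering e1 Cv -> total_clique_covering e2 (image_cover f Cv).
Proof.
case/and3P=> /forall_inP Cv_cliques /forallP Cv_vertices /forallP Cv_edges.
apply/and3P; split.
- by apply/forall_inP => _ /imsetP[C CCv ->]; apply/clique_imset/Cv_cliques.
- apply/forallP => v; have /exists_inP[C CCv vC] := Cv_vertices (g v).
  by apply/exists_inP; exists (f @: C); rewrite ?imset_f // -[v]gK imset_f.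
apply/forallP => x; apply/forallP => y; apply/implyP; rewrite -adj_can_inv.
move/(implyP (forallP (Cv_edges (g x)) (g y))) => /exists_inP[C CCv /andP[xC yC]].
by apply/exists_inP; exists (f @: C); rewrite ?imset_f // -[x]gK -[y]gK !imset_f.
Qed.

Lemma isolated_singleton_image (C : {set V1}) :
  [exists v, isolated e2 v && (f @: C == [set v])] =
  [exists v, isolated e1 v && (C == [set v])].
Proof.
apply/existsP/existsP => -[v /andP[iso_v /eqP Cv]].
  exists (g v); rewrite -isolated_iso gK iso_v; apply/eqP/imset_f_inj.
  by rewrite /= Cv imset_set1 gK.
by exists (f v); rewrite isolated_iso iso_v Cv imset_set1 eqxx.
Qed.

Lemma nonisolated_cliques_image Cv :
  nonisolated_cliques e2 (image_cover f Cv) = image_cover f (nonisolated_cliques e1 Cv).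
Proof.
apply/setP => C'; rewrite !inE; apply/andP/imsetP => [[/imsetP[C CCv ->]]|[C]].
  by rewrite isolated_singleton_image => C_noniso; exists C; rewrite // inE CCv.
rewrite inE => /andP[CCv C_noniso] ->.
by rewrite imset_f // isolated_singleton_image.
Qed.

Lemma vertex_label_image s v :
  vertex_label e2 [seq f @: C | C : {set V1} <- s] (f v) = vertex_label e1 s v.
Proof.
rewrite /vertex_label isolated_iso size_map; case: ifP => // _.
by apply: eq_bigl => i; rewrite (nth_map set0) // mem_imset.
Qed.

Lemma coding_sequence_image s :
  coding_sequence e2 [seq f @: C | C : {set V1} <- s] = coding_sequence e1 s.
Proof.
apply/(perm_sortP leq_total leq_trans anti_leq); rewrite perm_sym.
rewrite -(eq_map (vertex_label_image s)) map_comp perm_map //.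
apply: uniq_perm => [||v]; rewrite ?(map_inj_uniq f_inj) ?enum_uniq //.
by rewrite mem_enum -[v]gK map_f ?mem_enum.
Qed.

Lemma perm_enum_image_cover (Cv : {set {set V1}}) :
  perm_eq [seq f @: C | C : {set V1} <- enum Cv] (enum (image_cover f Cv)).
Proof.
apply: uniq_perm; rewrite ?map_inj_uniq ?enum_uniq // => C'.
rewrite mem_enum; apply/mapP/imsetP => -[C];
  by rewrite ?mem_enum => CCv ->; exists C; rewrite ?mem_enum.
Qed.

Lemma code_of_covering_image_sub Cv x :
  x \in [seq coding_sequence e1 s | s <- permutations (enum (nonisolated_cliques e1 Cv))] ->
  x \in [seq coding_sequence e2 s
         | s <- permutations (enum (nonisolated_cliques e2 (image_cover f Cv)))].
Proof.
case/mapP=> s; rewrite mem_permutations => s_perm ->.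
apply/mapP; exists [seq f @: C | C : {set V1} <- s]; last by rewrite coding_sequence_image.
rewrite mem_permutations nonisolated_cliques_image.
exact: perm_trans (perm_map _ s_perm) (perm_enum_image_cover _).
Qed.

End GraphIsoTransport.

Lemma image_coverK (T1 T2 : finType) (f : T1 -> T2) (g : T2 -> T1) :
  cancel f g -> cancel (image_cover f) (image_cover g).
Proof.
by move=> fK Cv; rewrite /image_cover -imset_comp (eq_imset _ (imsetK fK)) imset_id.
Qed.

Section GraphIsoCode.
Variables (V1 V2 : finType) (e1 : rel V1) (e2 : rel V2) (f : V1 -> V2) (g : V2 -> V1).
Hypotheses (fK : cancel f g) (gK : cancel g f).
Hypothesis f_adj : forall x y, e2 (f x) (f y) = e1 x y.

Let g_adj : forall x y, e1 (g x) (g y) = e2 x y := adj_can_inv gK f_adj.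

Lemma code_of_covering_image Cv :
  code_of_covering e2 (image_cover f Cv) = code_of_covering e1 Cv.
Proof.
apply: eq_lexmin_list => x; apply/idP/idP; last exact: code_of_covering_image_sub.
by move/(code_of_covering_image_sub gK fK g_adj); rewrite image_coverK.
Qed.

Lemma min_total_clique_covering_image Cv :
  min_total_clique_covering e1 Cv -> min_total_clique_covering e2 (image_cover f Cv).
Proof.
case/andP=> Cv_cover /forall_inP Cv_min; rewrite /min_total_clique_covering.
rewrite (total_clique_covering_image fK gK f_adj) //=; apply/forall_inP => Cv' Cv'_cover.
have := Cv_min _ (total_clique_covering_image gK fK g_adj Cv'_cover).
by rewrite !card_imset //; apply: can_inj (imsetK _).
Qed.

End GraphIsoCode.

Lemma iso_of_code (V1 V2 : finType) (e1 : rel V1) (e2 : rel V2) :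
  simple_graph e1 -> simple_graph e2 -> code e1 = code e2 -> graph_iso e1 e2.
Proof.
case=> e1_sym e1_irr [e2_sym e2_irr] code12.
have [Cv1 [s1 [Cv1_cover s1_perm code1]]] := code_coding_sequence e1_sym.
have [Cv2 [s2 [Cv2_cover s2_perm code2]]] := code_coding_sequence e2_sym.
have [h h_bij h_label] : exists2 h : V1 -> V2, bijective h &
    forall v, vertex_label e2 s2 (h v) = vertex_label e1 s1 v.
  apply: perm_codom_bij; apply/(perm_sortP leq_total leq_trans anti_leq).
  by change (coding_sequence e1 s1 = coding_sequence e2 s2); rewrite -code1 -code2.
exists h; split=> // x y.
rewrite (adj_vertex_label e1_sym e1_irr Cv1_cover s1_perm).
rewrite (adj_vertex_label e2_sym e2_irr Cv2_cover s2_perm).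
by rewrite (inj_eq (bij_inj h_bij)) !h_label.
Qed.

Lemma code_iso (V1 V2 : finType) (e1 : rel V1) (e2 : rel V2) :
  graph_iso e1 e2 -> code e1 = code e2.
Proof.
case=> f [[g fK gK] f_adj]; have g_adj := adj_can_inv gK f_adj.
apply: eq_lexmin_list => x; apply/mapP/mapP => -[Cv]; rewrite mem_enum inE => Cv_min ->.
  exists (image_cover f Cv); last by rewrite (code_of_covering_image fK gK f_adj).
  by rewrite mem_enum inE (min_total_clique_covering_image fK gK f_adj).
exists (image_cover g Cv); last by rewrite (code_of_covering_image gK fK g_adj).
by rewrite mem_enum inE (min_total_clique_covering_image gK fK g_adj).
Qed.

Theorem theorem3 (V1 V2 : finType) (e1 : rel V1) (e2 : rel V2) :
  simple_graph e1 -> simple_graph e2 ->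
  (graph_iso e1 e2 <-> code e1 = code e2).
Proof. by move=> G1 G2; split; [apply: code_iso | apply: iso_of_code]. Qed.
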